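(* Fix $\alpha\in(0,\tfrac12)$ and run Algorithm 2 (described in the context) with parameter $\alpha$ on any instance of dynamic bin packing with $n$ items. Then the algorithm makes at most $\frac{4\alpha}{1-2\alpha}\cdot n$ migrations.
   Context: Dynamic bin packing: bins have capacity $1$; items arrive online at times $a_i\ge0$ with size $s_i\in[0,1]$ and (unknown at arrival) duration $d_i>0$, and depart at $a_i+d_i$. The load of a bin is the total size of its items; a bin is open while nonempty. A migration is a move of one already placed item to a different bin. FirstFit with a given ordering of bins places an item into the first bin in the order with enough remaining capacity, or opens a new bin. Algorithm 1 (parameters $\alpha, f$): each bin is labeled Bad or Good. When an item $i$ of size $s_i$ arrives: if there is a Bad bin with load $\le 1-s_i$, put $i$ there, and if its load becomes $\ge f$ relabel it Good; otherwise, if there is a Good bin with load $\le1-s_i$, put $i$ into any such bin; otherwise open a new bin for $i$, labeled Bad if its load is $<f$ and Good otherwise. When an item departs: if its bin was Good and now has load $<\alpha$, migrate all items remaining in that bin using FirstFit with bins ordered Bad bins, then Good bins, then new bins. Algorithm 2 (parameter $\alpha$): an item has class $c\in\{0,1,2,\dots\}$ if its size lies in $(2^{-(c+1)},2^{-c}]$. Initialize a guess $\tilde\rho=1$, an instance of Algorithm 1 for class $0$ with parameters $(\alpha,\tfrac12)$, and one junk bin. For each arriving item: if the current number of items in the system is $\ge\tilde\rho$, double $\tilde\rho$, initialize a new instance of Algorithm 1 for class $c=\log_2\tilde\rho$ with parameters $(\alpha,1-2^{-c})$, and open a new junk bin for this guess. Then, if the item's class $c$ satisfies $c<\log_2\tilde\rho$,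 assign it using the Algorithm 1 instance for class $c$ (each instance uses its own bins); otherwise assign it to the junk bin of the current guess $\tilde\rho$. *)

From HB Require Import structures.
From mathcomp Require Import all_boot all_order all_algebra.
From mathcomp Require Import reals.
Set Implicit Arguments. Unset Strict Implicit. Unset Printing Implicit Defensive.
Import Order.TTheory GRing.Theory Num.Theory.
Local Open Scope ring_scope.

(* Dynamic bin packing with n items, Algorithm 1 / Algorithm 2 modelled as a
   nondeterministic transition relation: every choice left open by the paper
   ("any such bin", order of bins inside the Bad / Good groups, order in which
   the remaining items of a bin are migrated, which fresh bin is opened, tie
   breaking between simultaneous events) is universally quantified. *)

Section DBP.
Variable R : realType.
Variable n : nat.

Record instance := Instance {
  arr : 'I_n -> R;
  sz  : 'I_n -> R;
  dur : 'I_n -> R }.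

Definition valid_instance (I : instance) : Prop :=
  forall i, 0 <= arr I i /\ 0 <= sz I i <= 1 /\ 0 < dur I i.

(* inl i = arrival of item i (time a_i); inr i = departure of item i (time a_i+d_i) *)
Definition event := ('I_n + 'I_n)%type.

Definition ev_time (I : instance) (e : event) : R :=
  match e with inl i => arr I i | inr i => arr I i + dur I i end.

Definition valid_schedule (I : instance) (evs : seq event) : Prop :=
  perm_eq evs ([seq (inl i : event) | i <- enum 'I_n] ++
               [seq (inr i : event) | i <- enum 'I_n]) /\
  sorted (fun e1 e2 : event => ev_time I e1 <= ev_time I e2) evs.

(* Where an item sits: inl (c, b) = bin number b of the Algorithm 1 instance
   for class c;  inr k = the junk bin of the guess rho = 2^k. *)
Definition place := ((nat * nat) + nat)%type.

(* guess = log2 of the current guess rho;  loc i = bin of item i (None if the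
   item is not in the system);  good c b = label of bin b of instance c
   (true = Good, false = Bad). *)
Record state := State {
  guess : nat;
  loc : 'I_n -> option place;
  good : nat -> nat -> bool }.

Definition init_state : state := State 0 (fun _ => None) (fun _ _ => false).

Definition upd_loc (l : 'I_n -> option place) (i : 'I_n) (p : option place) :=
  fun j => if j == i then p else l j.

Definition upd_lab (g : nat -> nat -> bool) (c b : nat) (v : bool) :=
  fun c' b' => if (c' == c) && (b' == b) then v else g c' b'.

Definition move (st : state) (i : 'I_n) (p : option place) : state :=
  State (guess st) (upd_loc (loc st) i p) (good st).

Definition relabel (st : state) (c b : nat) (v : bool) : state :=
  State (guess st) (loc st) (upd_lab (good st) c b v).

Definition nitems (st : state) : nat := #|[pred i : 'I_n | loc st i != None]|.

Definition in_bin (st : state) (c b : nat) (i : 'I_n) : bool :=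
  loc st i == Some (inl (c, b)).

Definition is_open (st : state) (c b : nat) : bool := [exists i, in_bin st c b i].

Definition load (I : instance) (st : state) (c b : nat) : R :=
  \sum_(i < n | in_bin st c b i) sz I i.

Definition class_of (x : R) (c : nat) : Prop := 2%:R ^- c.+1 < x <= 2%:R ^- c.

(* parameter f of the Algorithm 1 instance for class c:
   1/2 for the initial instance (class 0), 1 - 2^-c for class c >= 1 *)
Definition fpar (c : nat) : R := if c is 0 then 2^-1 else 1 - 2%:R ^- c.

(* For an already open
   bin: Bad -> Good if the load becomes >= f (no-op for a Good bin). *)
Definition put_open (I : instance) (st : state) (c b : nat) (i : 'I_n) : state :=
  let st1 := move st i (Some (inl (c, b))) in
  if fpar c <= load I st c b + sz I i then relabel st1 c b true else st1.

Definition put_new (I : instance) (st : state) (c b : nat) (i : 'I_n) : state :=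
  relabel (move st i (Some (inl (c, b)))) c b (fpar c <= sz I i).

Definition fits (I : instance) (st : state) (c b : nat) (i : 'I_n) : bool :=
  load I st c b <= 1 - sz I i.

Inductive alg1_arrive (I : instance) (st : state) (c : nat) (i : 'I_n) : state -> Prop :=
| A1_bad b :
    is_open st c b -> ~~ good st c b -> fits I st c b i ->
    alg1_arrive I st c i (put_open I st c b i)
| A1_good b :
    (forall b', is_open st c b' -> ~~ good st c b' -> ~~ fits I st c b' i) ->
    is_open st c b -> good st c b -> fits I st c b i ->
    alg1_arrive I st c i (move st i (Some (inl (c, b))))
| A1_new b :
    (forall b', is_open st c b' -> ~~ fits I st c b' i) ->
    ~~ is_open st c b ->
    alg1_arrive I st c i (put_new I st c b i).

(* FirstFit migration of the items [its] (in this order) out of bin src of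
   instance c, with bins ordered L (existing bins: Bad ones, then Good ones)
   followed by the bins N newly opened during this migration, in order. *)
Inductive ff_migrate (I : instance) (c src : nat) (L : seq nat) :
    seq nat -> seq 'I_n -> state -> state -> Prop :=
| FF_nil N st : ff_migrate I c src L N [::] st st
| FF_fit N j js st b st' :
    b \in L ++ N -> fits I st c b j ->
    (forall b', b' \in take (index b (L ++ N)) (L ++ N) -> ~~ fits I st c b' j) ->
    ff_migrate I c src L N js (put_open I st c b j) st' ->
    ff_migrate I c src L N (j :: js) st st'
| FF_new N j js st b st' :
    (forall b', b' \in L ++ N -> ~~ fits I st c b' j) ->
    ~~ is_open st c b -> b != src ->
    ff_migrate I c src L (rcons N b) js (put_new I st c b j) st' ->
    ff_migrate I c src L N (j :: js) st st'.

(* Departure of item i; the nat is the number of migrations performed. *)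
Inductive depart (I : instance) (alpha : R) (st : state) (i : 'I_n) :
    state -> nat -> Prop :=
| D_junk k :
    loc st i = Some (inr k) ->
    depart I alpha st i (move st i None) 0
| D_nomig c b :
    loc st i = Some (inl (c, b)) ->
    ~~ (good st c b && (load I (move st i None) c b < alpha)) ->
    depart I alpha st i (move st i None) 0
| D_mig c b its Lb Lg st' :
    loc st i = Some (inl (c, b)) ->
    good st c b -> load I (move st i None) c b < alpha ->
    uniq its -> (forall j, (j \in its) = in_bin (move st i None) c b j) ->
    uniq (Lb ++ Lg) ->
    (forall b', (b' \in Lb ++ Lg) = (b' != b) && is_open (move st i None) c b') ->
    all (fun b' => ~~ good st c b') Lb -> all (good st c) Lg ->
    ff_migrate I c b (Lb ++ Lg) [::] its (move st i None) st' ->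
    depart I alpha st i st' (size its).

(* Algorithm 2: if #items >= rho then rho := 2 rho (this initialises the new
   Algorithm 1 instance for class log2 rho and a new junk bin). *)
Definition new_guess (st : state) : nat :=
  if (2 ^ guess st <= nitems st)%N then (guess st).+1 else guess st.

Definition set_guess (st : state) (k : nat) : state := State k (loc st) (good st).

Inductive arrive (I : instance) (st : state) (i : 'I_n) : state -> Prop :=
| Ar_alg c st' :
    class_of (sz I i) c -> (c < new_guess st)%N ->
    alg1_arrive I (set_guess st (new_guess st)) c i st' ->
    arrive I st i st'
| Ar_junk :
    (forall c, class_of (sz I i) c -> (new_guess st <= c)%N) ->
    arrive I st i (move (set_guess st (new_guess st)) i (Some (inr (new_guess st)))).

Inductive run (I : instance) (alpha : R) : state -> seq event -> state -> nat -> Prop :=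
| Run_nil st : run I alpha st [::] st 0
| Run_arr st i evs st1 st2 m :
    arrive I st i st1 -> run I alpha st1 evs st2 m ->
    run I alpha st (inl i :: evs) st2 m
| Run_dep st i evs st1 k st2 m :
    depart I alpha st i st1 k -> run I alpha st1 evs st2 m ->
    run I alpha st (inr i :: evs) st2 (k + m).

End DBP.

From HB Require Import structures.
From mathcomp Require Import all_boot all_order all_algebra.
From mathcomp Require Import reals ring lra finmap.

(* A Good open bin of the Algorithm 1 instance for class c, with load x, carries
   the potential rate * 2^c * max(0, f_c - x), where rate = 4 alpha / (1 - 2 alpha).
   Placing an item never increases the potential: it only adds load, and a bin
   turns (or is opened) Good only once its load reaches f_c.  A departing item of
   class c has size at most 2^-c, so it raises the potential by at most rate.
   A Good bin emptied by migration has load x < alpha, hence holds at most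
   2^(c+1) x items (each has size > 2^-(c+1)); as f_c >= 1/2, 2 x <= rate (f_c - x),
   so its potential pays for these migrations.  Hence the number of migrations is
   at most rate times the number of departures, i.e. rate * n.  The guesses of
   Algorithm 2 matter only in that every item stays in the instance of its class. *)

Import Order.TTheory GRing.Theory Num.Theory.
Local Open Scope ring_scope.
Set Implicit Arguments. Unset Strict Implicit.

Section ClassArithmetic.
Variable R : realType.

Lemma class_of_mul_le1 (x : R) c : class_of x c -> 2 ^+ c * x <= 1.
Proof.
case/andP => _ le_x; have pos_c : 0 < 2 ^+ c :> R by rewrite exprn_gt0.
by rewrite -[leRHS](mulfV (lt0r_neq0 pos_c)) ler_pM2l.
Qed.

Lemma fpar_ge_half c : 2^-1 <= fpar R c.
Proof.
case: c => [|c] //=; rewrite lerBrDl -lerBrDr.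
have -> : 1 - 2^-1 = 2^-1 :> R by field.
by rewrite lef_pV2 ?posrE ?exprn_gt0 // exprS ler_peMr // exprn_ege1 // ler1n.
Qed.

End ClassArithmetic.

Section Bins.
Variables (R : realType) (n : nat) (I : instance R n).
Hypothesis valid_I : valid_instance I.

Lemma sz_ge0 i : 0 <= sz I i.
Proof. by case: (valid_I i) => _ [/andP[]]. Qed.

Definition classed (st : state n) : Prop :=
  forall i c b, loc st i = Some (inl (c, b)) -> class_of (sz I i) c.

Lemma classed_init : classed (init_state n).
Proof. by []. Qed.

Lemma load_closed st c b : ~~ is_open st c b -> load I st c b = 0.
Proof. by move=> /existsPn closed; rewrite /load big_pred0 // => i; apply: negbTE. Qed.

Lemma card_bin_le_load st c b : classed st ->
  #|[pred i | in_bin st c b i]|%:R <= 2 ^+ c.+1 * load I st c b.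
Proof.
move=> cl; have pos_c : 0 < 2 ^+ c.+1 :> R by rewrite exprn_gt0.
rewrite -[leLHS]mulr1 -[X in _ * X](mulfV (lt0r_neq0 pos_c)) mulrCA ler_pM2l //.
rewrite /load -sumr_const mulr_suml; apply: ler_sum => i /eqP in_b.
by rewrite mul1r; case/andP: (cl _ _ _ in_b) => /ltW.
Qed.

Lemma load_remove st i c b : in_bin st c b i ->
  load I (move st i None) c b = load I st c b - sz I i.
Proof.
move=> in_b; rewrite /load [in RHS](bigD1 i) //= [RHS]addrC addKr.
apply: eq_bigl => j; rewrite /in_bin /= /upd_loc.
by case: (j =P i); rewrite ?andbT ?andbF.
Qed.

Definition relocates (st st' : state n) (j : 'I_n) (c b : nat) : Prop :=
  loc st' =1 upd_loc (loc st) j (Some (inl (c, b))) /\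
  forall c' b', (c', b') != (c, b) -> good st' c' b' = good st c' b'.

Lemma relocates_move st j c b : relocates st (move st j (Some (inl (c, b)))) j c b.
Proof. by []. Qed.

Lemma relocates_put_open st j c b : relocates st (put_open I st c b j) j c b.
Proof.
rewrite /put_open; case: ifP => // _; split=> // c' b' ne /=.
by rewrite /upd_lab -xpair_eqE (negbTE ne).
Qed.

Lemma relocates_put_new st j c b : relocates st (put_new I st c b j) j c b.
Proof. by split=> // c' b' ne /=; rewrite /upd_lab -xpair_eqE (negbTE ne). Qed.

Lemma in_bin_relocate st st' j c b c' b' i : relocates st st' j c b ->
  in_bin st' c' b' i = if i == j then (c, b) == (c', b') else in_bin st c' b' i.
Proof. by case=> loc_rel _; rewrite /in_bin loc_rel /upd_loc; case: (i =P j). Qed.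

Lemma load_relocate st st' j c b : relocates st st' j c b -> ~~ in_bin st c b j ->
  load I st' c b = load I st c b + sz I j.
Proof.
move=> rel j_out; rewrite /load (bigD1 j) /=; last by rewrite (in_bin_relocate _ _ _ rel) eqxx.
rewrite addrC; congr (_ + _); apply: eq_bigl => i.
rewrite (in_bin_relocate _ _ _ rel); case: (i =P j) => [-> | _]; last by rewrite andbT.
by rewrite andbF (negbTE j_out).
Qed.

Lemma classed_relocate st st' j c b : classed st -> relocates st st' j c b ->
  class_of (sz I j) c -> classed st'.
Proof.
move=> cl [loc' _] cl_j i c' b'; rewrite loc' /upd_loc.
by case: eqP => [-> [<- _] | _ /cl].
Qed.

Lemma classed_remove st i : classed st -> classed (move st i None).
Proof. by move=> cl j c b /=; rewrite /upd_loc; case: eqP => // _ /cl. Qed.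

Lemma is_open_relocate st st' j c b c' b' : relocates st st' j c b ->
  loc st j != Some (inl (c', b')) -> is_open st c' b' -> is_open st' c' b'.
Proof.
move=> rel j_out /existsP[i in_i]; apply/existsP; exists i.
rewrite (in_bin_relocate _ _ _ rel); case: (i =P j) => // eq_ij.
by move: j_out; rewrite -eq_ij => /negP[].
Qed.

Lemma loc_relocate_absent st st' j c b i : relocates st st' j c b ->
  loc st j != None -> loc st i = None -> loc st' i = None.
Proof.
case=> loc' _ present_j absent_i; rewrite loc' /upd_loc.
by case: (i =P j) => // eq_ij; move: present_j; rewrite -eq_ij absent_i.
Qed.

End Bins.

Definition is_departure {n} (e : event n) : bool := if e is inr _ then true else false.

Section Potential.
Variables (R : realType) (n : nat) (I : instance R n) (alpha : R).
Hypotheses (alpha_range : 0 < alpha < 2^-1) (valid_I : valid_instance I).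

Definition rate : R := 4 * alpha / (1 - 2 * alpha).

Lemma rate_ge0 : 0 <= rate.
Proof. by case/andP: alpha_range => *; rewrite divr_ge0 //; lra. Qed.

Lemma double_le_rate_deficit f x : 2^-1 <= f -> x <= alpha ->
  2 * x <= rate * Num.max 0 (f - x).
Proof.
case/andP: alpha_range => alpha_gt0 alpha_lt f_ge x_le.
have identity : rate * (2^-1 - x) - 2 * x = 2 * (alpha - x) / (1 - 2 * alpha).
  by rewrite /rate; field; lra.
have : 0 <= 2 * (alpha - x) / (1 - 2 * alpha) by rewrite divr_ge0 //; lra.
have : 2^-1 - x <= Num.max 0 (f - x) by rewrite le_max; apply/orP; right; lra.
move=> /(ler_wpM2l rate_ge0); lra.
Qed.

Lemma rate_exp_ge0 c : 0 <= rate * 2 ^+ c.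
Proof. by rewrite mulr_ge0 ?rate_ge0 ?exprn_ge0. Qed.

Definition deficit (st : state n) c b : R := Num.max 0 (fpar R c - load I st c b).

Lemma deficit_ge0 st c b : 0 <= deficit st c b.
Proof. by rewrite /deficit le_max lexx. Qed.

Definition phi (st : state n) (p : nat * nat) : R :=
  if good st p.1 p.2 && is_open st p.1 p.2 then rate * 2 ^+ p.1 * deficit st p.1 p.2
  else 0.

Lemma phi_ge0 st p : 0 <= phi st p.
Proof.
rewrite /phi; case: ifP => // _.
by rewrite mulr_ge0 ?rate_exp_ge0 ?deficit_ge0.
Qed.

Lemma phi_closed st c b : ~~ is_open st c b -> phi st (c, b) = 0.
Proof. by rewrite /phi /= => /negbTE ->; rewrite andbF. Qed.

Definition occupied (st : state n) : {fset nat * nat} :=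
  [fset p in pmap (fun i => if loc st i is Some (inl p) then Some p else None)
                   (enum 'I_n)]%fset.

Lemma occupied_open st c b : is_open st c b -> (c, b) \in occupied st.
Proof.
case/existsP=> i /eqP loc_i; rewrite inE mem_pmap.
by apply/mapP; exists i; rewrite ?mem_enum ?loc_i.
Qed.

Definition Phi (st : state n) : R := \sum_(p <- occupied st) phi st p.

Lemma Phi_ge0 st : 0 <= Phi st.
Proof. by rewrite sumr_ge0 // => p _; apply: phi_ge0. Qed.

Lemma Phi_sum_incl st (S : {fset nat * nat}) :
  (occupied st `<=` S)%fset -> Phi st = \sum_(p <- S) phi st p.
Proof.
move=> sub; apply: big_fset_incl => // -[c b] _ not_occ.
by apply: phi_closed; apply: contra not_occ; apply: occupied_open.
Qed.

Lemma Phi_le_except st st' p0 : (forall p, p != p0 -> phi st' p <= phi st p) ->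
  Phi st' - phi st' p0 <= Phi st - phi st p0.
Proof.
move=> le_phi; set S := (p0 |` (occupied st `|` occupied st'))%fset.
have p0_S : p0 \in S by rewrite fset1U1.
rewrite (@Phi_sum_incl st S) ?(@Phi_sum_incl st' S); first last.
- by apply/fsubsetP => p p_in; rewrite in_fset1U in_fsetU p_in ?orbT.
- by apply/fsubsetP => p p_in; rewrite in_fset1U in_fsetU p_in ?orbT.
clearbody S; rewrite !(bigD1_seq p0 p0_S (fset_uniq S)) /= ![phi _ p0 + _]addrC !addrK.
by apply: ler_sum => p /le_phi.
Qed.

Lemma Phi_le st st' : (forall p, phi st' p <= phi st p) -> Phi st' <= Phi st.
Proof.
move=> le_phi; have := le_phi (0, 0)%N.
have := @Phi_le_except st st' (0, 0)%N (fun p _ => le_phi p); lra.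
Qed.

Lemma phi_ext st st' c b :
  in_bin st' c b =1 in_bin st c b -> good st' c b = good st c b ->
  phi st' (c, b) = phi st (c, b).
Proof.
move=> same_bin same_good; rewrite /phi /= same_good /is_open (eq_existsb same_bin).
by rewrite /deficit /load (eq_bigl _ _ same_bin).
Qed.

Lemma phi_eq_other st st' j x c b :
  loc st' =1 upd_loc (loc st) j x -> good st' c b = good st c b ->
  loc st j != Some (inl (c, b)) -> x != Some (inl (c, b)) ->
  phi st' (c, b) = phi st (c, b).
Proof.
move=> loc' same_good not_src not_dst; apply: phi_ext => // i.
rewrite /in_bin loc' /upd_loc; case: (i =P j) => // ->.
by rewrite (negbTE not_src) (negbTE not_dst).
Qed.

Lemma phi_relocate_target st st' j c b :
  relocates st st' j c b -> ~~ in_bin st c b j ->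
  (good st' c b -> fpar R c <= load I st' c b \/ good st c b && is_open st c b) ->
  phi st' (c, b) <= phi st (c, b).
Proof.
move=> rel j_out labels; rewrite {1}/phi /=.
case: ifP => [/andP[/labels [full | /andP[good_b open_b]] _] | _]; last exact: phi_ge0.
  by rewrite /deficit max_l ?subr_le0 // mulr0 phi_ge0.
rewrite /phi /= good_b open_b ler_wpM2l ?rate_exp_ge0 //.
rewrite /deficit (load_relocate I rel j_out) le_max2 //.
by rewrite lerD2l lerNr opprK lerDl (sz_ge0 valid_I).
Qed.

Lemma phi_put_open st j c b : ~~ in_bin st c b j -> is_open st c b ->
  phi (put_open I st c b j) (c, b) <= phi st (c, b).
Proof.
move=> j_out open_b; apply: (phi_relocate_target (relocates_put_open I st j c b) j_out).
rewrite /put_open (load_relocate I (relocates_put_open I st j c b) j_out).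
by case: ifP => [full _ | _ good_b]; [left | right; rewrite good_b].
Qed.

Lemma phi_put_new st j c b : ~~ is_open st c b ->
  phi (put_new I st c b j) (c, b) <= phi st (c, b).
Proof.
move=> closed_b; have j_out : ~~ in_bin st c b j.
  by apply: contra closed_b => in_b; apply/existsP; exists j.
apply: (phi_relocate_target (relocates_put_new I st j c b) j_out).
rewrite /= /upd_lab !eqxx (load_relocate I (relocates_put_new I st j c b) j_out).
by rewrite load_closed // add0r => full; left.
Qed.

Lemma phi_move_good st j c b : ~~ in_bin st c b j -> is_open st c b ->
  phi (move st j (Some (inl (c, b)))) (c, b) <= phi st (c, b).
Proof.
move=> j_out open_b; apply: (phi_relocate_target (relocates_move st j c b) j_out).
by move=> /= good_b; right; rewrite good_b.
Qed.

Lemma Phi_relocate st st' j c b p0 :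
  relocates st st' j c b -> phi st' (c, b) <= phi st (c, b) ->
  (forall p, loc st j = Some (inl p) -> p = p0) ->
  Phi st' - phi st' p0 <= Phi st - phi st p0.
Proof.
move=> [loc' good'] le_target src_j; apply: Phi_le_except => -[c' b'] ne.
have [[-> ->] // | ne_target] := eqVneq (c', b') (c, b).
rewrite (phi_eq_other loc') ?good' //; last by rewrite eq_sym.
by apply: contra ne => /eqP/src_j ->.
Qed.

Lemma phi_remove st i c b : classed I st -> loc st i = Some (inl (c, b)) ->
  phi (move st i None) (c, b) <= phi st (c, b) + rate.
Proof.
move=> cl loc_i; have in_b : in_bin st c b i by rewrite /in_bin loc_i.
rewrite {1}/phi /=; case: ifP => [/andP[good_b _] | _]; last first.
  by rewrite addr_ge0 ?phi_ge0 ?rate_ge0.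
have open_b : is_open st c b by apply/existsP; exists i.
have le_deficit : deficit (move st i None) c b <= deficit st c b + sz I i.
  rewrite /deficit (load_remove I in_b) ge_max addr_ge0 ?deficit_ge0 ?sz_ge0 //=.
  by rewrite opprB addrA addrAC lerD2r le_max lexx orbT.
rewrite /phi /= good_b open_b.
apply: le_trans (ler_wpM2l (rate_exp_ge0 c) le_deficit) _.
rewrite mulrDr lerD2l -mulrA -[leRHS]mulr1 ler_wpM2l ?rate_ge0 //.
exact: class_of_mul_le1 (cl _ _ _ loc_i).
Qed.

Lemma Phi_remove st i : classed I st -> Phi (move st i None) <= Phi st + rate.
Proof.
move=> cl; have phi_other c b : loc st i != Some (inl (c, b)) ->
    phi (move st i None) (c, b) = phi st (c, b).
  by move=> ne; apply: (@phi_eq_other st _ i None).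
case loc_i: (loc st i) => [[[c b] | k] |].
- have := phi_remove cl loc_i.
  suff : Phi (move st i None) - phi (move st i None) (c, b) <= Phi st - phi st (c, b) by lra.
  apply: Phi_le_except => -[c' b'] ne; rewrite phi_other // loc_i.
  by apply: contra ne => /eqP[-> ->].
all: suff : Phi (move st i None) <= Phi st by have := rate_ge0; lra.
all: by apply: Phi_le => -[c b]; rewrite phi_other // loc_i.
Qed.

Lemma size_le_phi st c b its : classed I st -> uniq its ->
  (forall j, (j \in its) = in_bin st c b j) -> good st c b -> load I st c b < alpha ->
  (size its)%:R <= phi st (c, b).
Proof.
move=> cl uniq_its mem_its good_b small.
have -> : size its = #|[pred i | in_bin st c b i]|.
  by rewrite -(card_uniqP uniq_its); apply: eq_card => i; rewrite inE mem_its.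
apply: le_trans (card_bin_le_load c b cl) _.
rewrite /phi /= good_b; case: ifP => [open_b | /negbT closed_b]; last first.
  by rewrite load_closed // mulr0.
rewrite exprS -mulrA mulrCA (mulrC rate) -mulrA ler_pM2l ?exprn_gt0 //.
exact: double_le_rate_deficit (fpar_ge_half R c) (ltW small).
Qed.

Definition migrating c src (B : seq nat) (its : seq 'I_n) (st : state n) : Prop :=
  [/\ classed I st, uniq its, forall j, (j \in its) = in_bin st c src j
    & forall b, b \in B -> (b != src) && is_open st c b].

Lemma migrating_loc_head c src B j its st :
  migrating c src B (j :: its) st -> loc st j = Some (inl (c, src)).
Proof. by case=> _ _ mem_its _; apply/eqP; rewrite -[_ == _]/(in_bin _ _ _ _) -mem_its mem_head. Qed.

Lemma migrating_step c src B j its st st' b B' :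
  migrating c src B (j :: its) st -> relocates st st' j c b -> b != src ->
  phi st' (c, b) <= phi st (c, b) -> {subset B' <= b :: B} ->
  [/\ migrating c src B' its st',
      Phi st' - phi st' (c, src) <= Phi st - phi st (c, src)
    & forall i, loc st i = None -> loc st' i = None].
Proof.
move=> inv rel b_src le_target sub_B; have loc_j := migrating_loc_head inv.
case: inv => cl /andP[j_notin uniq_its] mem_its open_B.
split; last first.
- by move=> i; apply: (loc_relocate_absent rel); rewrite loc_j.
- by apply: Phi_relocate rel le_target _ => p; rewrite loc_j => -[].
split=> //.
- exact: (classed_relocate cl rel (cl _ _ _ loc_j)).
- move=> j'; rewrite (in_bin_relocate _ _ _ rel).
  case: (j' =P j) => [-> | /eqP ne]; last by rewrite -mem_its inE (negbTE ne).
  by rewrite (negbTE j_notin) xpair_eqE eqxx (negbTE b_src).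
move=> b' /sub_B; rewrite inE => /orP[/eqP -> | /open_B /andP[b'_src open_b']].
  by rewrite b_src; apply/existsP; exists j; rewrite (in_bin_relocate _ _ _ rel) eqxx.
rewrite b'_src (is_open_relocate rel) // loc_j.
by apply: contra b'_src => /eqP[->].
Qed.

Lemma ff_migrate_Phi c src L N its st st' :
  ff_migrate I c src L N its st st' -> migrating c src (L ++ N) its st ->
  [/\ classed I st', forall i, loc st i = None -> loc st' i = None,
      ~~ is_open st' c src
    & Phi st' - phi st' (c, src) <= Phi st - phi st (c, src)].
Proof.
elim=> {N its st st'}.
- move=> N st [cl _ mem_its _]; split=> //.
  by apply/existsPn => i; rewrite -mem_its.
- move=> N j its st b st' b_in _ _ _ IH inv.
  have loc_j := migrating_loc_head inv.
  have /andP[b_src open_b] : (b != src) && is_open st c b by case: inv => _ _ _; apply.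
  have j_out : ~~ in_bin st c b j.
    by rewrite /in_bin loc_j; apply: contra b_src => /eqP[->].
  have [inv' Phi_step absent] := migrating_step inv (relocates_put_open I st j c b) b_src
    (phi_put_open j_out open_b) (fun b' b'_in => mem_behead b'_in).
  have [cl' absent' closed Phi_IH] := IH inv'.
  by split=> //; [move=> i /absent /absent' | lra].
- move=> N j its st b st' _ closed_b b_src _ IH inv.
  have sub_B : {subset L ++ rcons N b <= b :: L ++ N}.
    by move=> b'; rewrite -cats1 catA mem_cat inE orbC.
  have [inv' Phi_step absent] := migrating_step inv (relocates_put_new I st j c b) b_src
    (phi_put_new j closed_b) sub_B.
  have [cl' absent' closed Phi_IH] := IH inv'.
  by split=> //; [move=> i /absent /absent' | lra].
Qed.

Lemma depart_Phi st i st1 k : depart I alpha st i st1 k -> classed I st ->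
  [/\ classed I st1, forall j, loc st j = None -> loc st1 j = None
    & k%:R + Phi st1 <= Phi st + rate].
Proof.
move=> dep cl; have cl0 : classed I (move st i None) := classed_remove cl.
have absent0 j : loc st j = None -> loc (move st i None) j = None.
  by rewrite /= /upd_loc; case: (j =P i).
have Phi0 := Phi_remove i cl.
case: dep => [k0 _ | c b _ _ | c b its Lb Lg st' _ good_b small uniq_its mem_its _ mem_L _ _ ff].
- by split=> //; rewrite add0r.
- by split=> //; rewrite add0r.
have inv : migrating c b ((Lb ++ Lg) ++ [::]) its (move st i None).
  by split=> // b'; rewrite cats0 mem_L.
have [cl' absent' closed Phi_ff] := ff_migrate_Phi ff inv.
have := size_le_phi cl0 uniq_its mem_its good_b small.
rewrite phi_closed // in Phi_ff.
by split=> //; [move=> j /absent0 /absent' | lra].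
Qed.

Lemma arrive_relocate st st' i c b : relocates st st' i c b -> class_of (sz I i) c ->
  classed I st -> loc st i = None -> phi st' (c, b) <= phi st (c, b) ->
  [/\ classed I st', forall j, j != i -> loc st' j = loc st j & Phi st' <= Phi st].
Proof.
move=> rel cls cl absent le_target; split.
- exact: classed_relocate cl rel cls.
- by move=> j ne; rewrite rel.1 /upd_loc (negbTE ne).
have : Phi st' - phi st' (c, b) <= Phi st - phi st (c, b).
  by apply: Phi_relocate rel le_target _ => p; rewrite absent.
lra.
Qed.

Lemma arrive_Phi st i st1 : arrive I st i st1 -> classed I st -> loc st i = None ->
  [/\ classed I st1, forall j, j != i -> loc st1 j = loc st j & Phi st1 <= Phi st].
Proof.
move=> arr cl absent; case: arr => [c st' cls _ alg1 | _].
  set st0 := set_guess st (new_guess st).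
  have [cl0 absent0] : classed I st0 /\ loc st0 i = None by [].
  suff [] : [/\ classed I st', forall j, j != i -> loc st' j = loc st0 j
             & Phi st' <= Phi st0] by [].
  have j_out b : ~~ in_bin st0 c b i by rewrite /in_bin absent0.
  case: alg1 => [b open_b _ _ | b _ open_b _ _ | b _ closed_b].
  - exact: (arrive_relocate (relocates_put_open I st0 i c b) cls cl0 absent0
             (phi_put_open (j_out b) open_b)).
  - exact: (arrive_relocate (relocates_move st0 i c b) cls cl0 absent0
             (phi_move_good (j_out b) open_b)).
  - exact: (arrive_relocate (relocates_put_new I st0 i c b) cls cl0 absent0
             (phi_put_new i closed_b)).
split.
- by move=> j c b /=; rewrite /upd_loc; case: (j =P i) => // _ /cl.
- by move=> j ne; rewrite /= /upd_loc (negbTE ne).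
by apply: Phi_le => -[c b]; rewrite (@phi_eq_other st _ i (Some (inr (new_guess st)))) // absent.
Qed.

Lemma run_Phi st evs st' m : run I alpha st evs st' m -> uniq evs -> classed I st ->
  (forall i, inl i \in evs -> loc st i = None) ->
  m%:R + Phi st' <= Phi st + rate * (count is_departure evs)%:R.
Proof.
elim=> {st evs st' m} [st _ _ _ | st i evs st1 st2 m arr _ IH | st i evs st1 k st2 m dep _ IH].
- by rewrite mulr0 add0r addr0.
- case/andP=> i_notin uniq_evs cl absent.
  have [cl1 same_loc Phi1] := arrive_Phi arr cl (absent i (mem_head _ _)).
  have absent1 j : inl j \in evs -> loc st1 j = None.
    move=> j_in; have ne : j != i by apply: contraNneq i_notin => <-.
    by rewrite same_loc // absent // inE j_in orbT.
  by have := IH uniq_evs cl1 absent1; rewrite /= add0n; lra.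
- case/andP=> _ uniq_evs cl absent.
  have [cl1 absent_kept Phi1] := depart_Phi dep cl.
  have absent1 j : inl j \in evs -> loc st1 j = None.
    by move=> j_in; apply/absent_kept/absent; rewrite inE j_in orbT.
  by have := IH uniq_evs cl1 absent1; rewrite /= !natrD mulrDr mulr1; lra.
Qed.

Lemma Phi_init : Phi (init_state n) = 0.
Proof. by rewrite /Phi big1. Qed.

End Potential.

Section Schedules.
Variables (R : realType) (n : nat) (I : instance R n) (evs : seq (event n)).
Hypothesis schedule : valid_schedule I evs.

Lemma valid_schedule_uniq : uniq evs.
Proof.
have inl_inj : injective (@inl 'I_n 'I_n) by move=> i j [].
have inr_inj : injective (@inr 'I_n 'I_n) by move=> i j [].
rewrite (perm_uniq schedule.1) cat_uniq !map_inj_uniq // -enumT enum_uniq /= andbT.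
by apply/hasPn => e /mapP[i _ ->]; apply/mapP => -[].
Qed.

Lemma valid_schedule_departures : count (@is_departure n) evs = n.
Proof.
rewrite (permP schedule.1) count_cat !count_map (eq_count (a2 := pred0)) // count_pred0.
by rewrite (eq_count (a2 := predT)) // count_predT -enumT size_enum_ord.
Qed.

End Schedules.

Unset Implicit Arguments.

Theorem lemma13 (R : realType) (n : nat) (alpha : R) (I : instance R n)
    (evs : seq (event n)) (st : state n) (m : nat) :
  0 < alpha < 2^-1 ->
  valid_instance I ->
  valid_schedule I evs ->
  run I alpha (init_state n) evs st m ->
  m%:R <= 4 * alpha / (1 - 2 * alpha) * n%:R.
Proof.
move=> alpha_range valid_I schedule run_evs.
have := run_Phi alpha_range valid_I run_evs (valid_schedule_uniq schedule)
  (classed_init I) (fun _ _ => erefl).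
rewrite Phi_init (valid_schedule_departures schedule) add0r.
have := Phi_ge0 I alpha_range st; rewrite /rate; lra.
Qed.
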